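(* Let $m\ge0$ and $q\in\{1,3\}$. Let $\theta:\widetilde H\to\mathbb T$ be given by $\theta(X)=\theta(Y)=1$, $\theta(z)=z^4$ for $z\in\mathbb T$, and $\psi:\widetilde H\to\mathbb T$ by $\psi(X)=-i$, $\psi(Y)=1$, $\psi(\mathbb T)=1$. Then the kernel of $2^m\theta+q\psi$ is generated by $\exp(\pi i q/2^{m+3})X$ and $Y$, and is isomorphic to $H(m,q)$.
   Context: $\mathbb T=\{z\in\mathbb C:|z|=1\}$. $\widetilde H$ is the compact Lie group with presentation $\langle X,Y,\mathbb T\mid X^4=Y^8=1,\ [\mathbb T,\widetilde H]=1,\ [X,\widetilde H']=1,\ [Y,[Y,X]]=i\rangle$. Homomorphisms to $\mathbb T$ are written additively: $(a\theta+b\psi)(g)=\theta(g)^a\psi(g)^b$. $H(m,q)$ is the group $\langle A,B\mid A^{2^{m+4}}=B^8=1,\ [A^4,H]=1,\ [A,H']=1,\ [B,[B,A]]=A^{q2^{m+2}}\rangle$, with $H'$ the derived subgroup. *)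

From Stdlib Require Import Reals Lra.
Open Scope R_scope.

Record Tc := mkT { tre : R; tim : R; tnorm : tre * tre + tim * tim = 1 }.

Lemma tmul_norm (a b c d : R) :
  a * a + b * b = 1 -> c * c + d * d = 1 ->
  (a * c - b * d) * (a * c - b * d) + (a * d + b * c) * (a * d + b * c) = 1.
Proof.
  intros H1 H2.
  replace ((a * c - b * d) * (a * c - b * d) + (a * d + b * c) * (a * d + b * c))
    with ((a * a + b * b) * (c * c + d * d)) by ring.
  rewrite H1, H2; ring.
Qed.

(* complex multiplication *)
Definition tmul (z w : Tc) : Tc :=
  mkT (tre z * tre w - tim z * tim w) (tre z * tim w + tim z * tre w)
      (tmul_norm _ _ _ _ (tnorm z) (tnorm w)).

Lemma t1_norm : 1 * 1 + 0 * 0 = 1. Proof. ring. Qed.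
Lemma ti_norm : 0 * 0 + 1 * 1 = 1. Proof. ring. Qed.
Lemma tmi_norm : 0 * 0 + (-1) * (-1) = 1. Proof. ring. Qed.

Definition t1 : Tc := mkT 1 0 t1_norm.
Definition ti : Tc := mkT 0 1 ti_norm.
Definition tmi : Tc := mkT 0 (-1) tmi_norm.

Fixpoint tpow (z : Tc) (n : nat) : Tc :=
  match n with O => t1 | S n => tmul z (tpow z n) end.

Lemma expi_norm (t : R) : cos t * cos t + sin t * sin t = 1.
Proof. pose proof (sin2_cos2 t) as H. unfold Rsqr in H. lra. Qed.

Definition expi (t : R) : Tc := mkT (cos t) (sin t) (expi_norm t).

Record group := Group {
  gcar :> Type;
  gmul : gcar -> gcar -> gcar;
  gone : gcar;
  ginv : gcar -> gcar;
  gmulA : forall x y z, gmul x (gmul y z) = gmul (gmul x y) z;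
  gmul1l : forall x, gmul gone x = x;
  gmul1r : forall x, gmul x gone = x;
  gmulVl : forall x, gmul (ginv x) x = gone;
  gmulVr : forall x, gmul x (ginv x) = gone }.

Arguments gmul {g} _ _.
Arguments gone {g}.
Arguments ginv {g} _.

Fixpoint gpow {G : group} (x : G) (n : nat) : G :=
  match n with O => gone | S n => gmul x (gpow x n) end.

Definition comm {G : group} (a b : G) : G :=
  gmul (gmul (ginv a) (ginv b)) (gmul a b).

Inductive gen {G : group} (S : G -> Prop) : G -> Prop :=
| gen_in : forall x, S x -> gen S x
| gen_one : gen S gone
| gen_mul : forall x y, gen S x -> gen S y -> gen S (gmul x y)
| gen_inv : forall x, gen S x -> gen S (ginv x).

Definition derived {G : group} (U : G -> Prop) : G -> Prop :=
  gen (fun g => exists a b, U a /\ U b /\ g = comm a b).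

(* ---------- H~ = < X, Y, T | X^4 = Y^8 = 1, [T,H~] = 1, [X,H~'] = 1,
                               [Y,[Y,X]] = i > ---------- *)
(* relations for (x, y, f : T -> G') inside the subgroup they generate *)
Definition Htilde_rels (G : group) (x y : G) (f : Tc -> G) : Prop :=
  let U := gen (fun g => g = x \/ g = y \/ exists z, g = f z) in
  (forall z w, f (tmul z w) = gmul (f z) (f w)) /\
  gpow x 4 = gone /\ gpow y 8 = gone /\
  (forall z g, U g -> gmul (f z) g = gmul g (f z)) /\
  (forall g, derived U g -> gmul x g = gmul g x) /\
  comm y (comm y x) = f ti.

Definition is_Htilde (G : group) (X Y : G) (iota : Tc -> G) : Prop :=
  Htilde_rels G X Y iota /\
  (forall g : G, gen (fun h => h = X \/ h = Y \/ exists z, h = iota z) g) /\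
  (forall (G' : group) (x y : G') (f : Tc -> G'), Htilde_rels G' x y f ->
     exists h : G -> G',
       (forall g1 g2, h (gmul g1 g2) = gmul (h g1) (h g2)) /\
       h X = x /\ h Y = y /\ (forall z, h (iota z) = f z)).

(* ---------- H(m,q) = < A, B | A^(2^(m+4)) = B^8 = 1, [A^4,H] = 1, [A,H'] = 1,
                               [B,[B,A]] = A^(q 2^(m+2)) > ---------- *)
Definition Hmq_rels (m q : nat) (G : group) (a b : G) : Prop :=
  let U := gen (fun g => g = a \/ g = b) in
  gpow a (2 ^ (m + 4)) = gone /\ gpow b 8 = gone /\
  (forall g, U g -> gmul (gpow a 4) g = gmul g (gpow a 4)) /\
  (forall g, derived U g -> gmul a g = gmul g a) /\
  comm b (comm b a) = gpow a (q * 2 ^ (m + 2)).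

Definition is_Hmq (m q : nat) (P : group) (A B : P) : Prop :=
  Hmq_rels m q P A B /\
  (forall p : P, gen (fun h => h = A \/ h = B) p) /\
  (forall (G' : group) (a b : G'), Hmq_rels m q G' a b ->
     exists h : P -> G',
       (forall p1 p2, h (gmul p1 p2) = gmul (h p1) (h p2)) /\ h A = a /\ h B = b).

Definition hom_to_T {G : group} (f : G -> Tc) : Prop :=
  forall g h, f (gmul g h) = tmul (f g) (f h).

(* Write N = 2^(m+2) and omega = zeta^4 = exp(2 pi i q / N), a primitive N-th root
   of unity generating all N-th roots of unity (q is coprime to N).
   (1) Kernel.  As iota(T) is central and X = iota(zeta)^-1 X', every element of H~
       is iota(z) w with w in W = <X', Y>.  chi kills X' and Y and chi(iota z) = z^N,
       so chi(iota(z) w) = 1 forces z = omega^k, and then iota(z) = X'^(4k) lies in W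
       because X^4 = 1.  Hence K = W.
   (2) Isomorphism.  X' and Y satisfy the relations of H(m,q), which yields
       h : H(m,q) -> H~ with image W.  Conversely the quotient of H(m,q) x T by the
       central element (A^4, omega^-1) of order N is a model of the relations of H~,
       which yields Phi : H~ -> model.  Phi o h is p |-> (p, 1), injective because
       omega has order exactly N; so h is injective and its inverse on W = K is the
       required isomorphism. *)
From Stdlib Require Import Reals Lra Lia ZArith Znumtheory.
From Stdlib Require Import ClassicalEpsilon FunctionalExtensionality.
From Stdlib Require Import PropExtensionality ProofIrrelevance.
Open Scope R_scope.

Arguments gmulA {g} x y z.
Arguments gmul1l {g} x.
Arguments gmul1r {g} x.
Arguments gmulVl {g} x.
Arguments gmulVr {g} x.

Section GroupFacts.
Variable G : group.
Implicit Types x y c : G.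

Lemma gmul_cancel_l x y z : gmul x y = gmul x z -> y = z.
Proof.
  intro H. rewrite <- (gmul1l y), <- (gmul1l z), <- (gmulVl x), <- !gmulA, H.
  reflexivity.
Qed.

Lemma ginv_unique x y : gmul x y = gone -> y = ginv x.
Proof. intro H. apply (gmul_cancel_l x). rewrite H, gmulVr. reflexivity. Qed.

Lemma ginv_mul x y : ginv (gmul x y) = gmul (ginv y) (ginv x).
Proof.
  symmetry. apply ginv_unique.
  rewrite <- gmulA, (gmulA y), gmulVr, gmul1l, gmulVr. reflexivity.
Qed.

Lemma gpow_add x n k : gpow x (n + k) = gmul (gpow x n) (gpow x k).
Proof.
  induction n as [|n IH]; simpl.
  - rewrite gmul1l. reflexivity.
  - rewrite IH, gmulA. reflexivity.
Qed.

Lemma gpow_mul x n k : gpow x (n * k) = gpow (gpow x n) k.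
Proof.
  induction k as [|k IH]; simpl.
  - rewrite Nat.mul_0_r. reflexivity.
  - rewrite Nat.mul_succ_r, Nat.add_comm, gpow_add, IH. reflexivity.
Qed.

Lemma gpow_one n : gpow (gone : G) n = gone.
Proof. induction n as [|n IH]; simpl; [|rewrite IH, gmul1l]; reflexivity. Qed.

Lemma gpow_multiple x n k : gpow x n = gone -> gpow x (n * k) = gone.
Proof. intro H. rewrite gpow_mul, H. apply gpow_one. Qed.

Section Central.
Variable c : G.
Hypothesis c_central : forall g, gmul c g = gmul g c.

Lemma gpow_central n g : gmul (gpow c n) g = gmul g (gpow c n).
Proof.
  induction n as [|n IH]; simpl.
  - rewrite gmul1l, gmul1r. reflexivity.
  - rewrite <- gmulA, IH, !gmulA, c_central. reflexivity.
Qed.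

Lemma gpow_mul_central x n : gpow (gmul c x) n = gmul (gpow c n) (gpow x n).
Proof.
  induction n as [|n IH]; simpl.
  - rewrite gmul1l. reflexivity.
  - rewrite IH, <- !gmulA. f_equal. rewrite !gmulA. f_equal.
    symmetry. apply gpow_central.
Qed.

Lemma comm_central a b : comm a (gmul c b) = comm a b.
Proof.
  unfold comm. rewrite ginv_mul, <- !gmulA. f_equal. f_equal.
  rewrite (gmulA a c b), <- (c_central a), <- (gmulA c a b), (gmulA (ginv c) c),
    gmulVl, gmul1l.
  reflexivity.
Qed.
End Central.

Lemma gen_least (S Pr : G -> Prop) :
  Pr gone -> (forall x y, Pr x -> Pr y -> Pr (gmul x y)) ->
  (forall x, Pr x -> Pr (ginv x)) -> (forall x, S x -> Pr x) ->
  forall x, gen S x -> Pr x.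
Proof. intros H1 HM HV HS x Hx. induction Hx; auto. Qed.

Lemma gen_mono (S S' : G -> Prop) :
  (forall x, S x -> S' x) -> forall x, gen S x -> gen S' x.
Proof.
  intro HS. apply gen_least; [apply gen_one | apply gen_mul | apply gen_inv |].
  intros x Hx. apply gen_in, HS, Hx.
Qed.

Lemma gen_pow (S : G -> Prop) x n : gen S x -> gen S (gpow x n).
Proof. intro H. induction n; simpl; [apply gen_one | apply gen_mul; auto]. Qed.
End GroupFacts.

Section Homomorphisms.
Variables G H : group.
Variable f : G -> H.
Hypothesis fM : forall a b, f (gmul a b) = gmul (f a) (f b).

Lemma hom_one : f gone = gone.
Proof. apply (gmul_cancel_l _ (f gone)). rewrite <- fM, !gmul1r. reflexivity. Qed.

Lemma hom_inv a : f (ginv a) = ginv (f a).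
Proof. apply ginv_unique. rewrite <- fM, gmulVr, hom_one. reflexivity. Qed.

Lemma hom_pow a n : f (gpow a n) = gpow (f a) n.
Proof. induction n as [|n IH]; simpl; [apply hom_one | rewrite fM, IH; reflexivity]. Qed.

Lemma hom_gen (S : G -> Prop) (T : H -> Prop) :
  (forall x, S x -> gen T (f x)) -> forall x, gen S x -> gen T (f x).
Proof.
  intro HS. apply gen_least; auto.
  - rewrite hom_one. apply gen_one.
  - intros x y Hx Hy. rewrite fM. apply gen_mul; assumption.
  - intros x Hx. rewrite hom_inv. apply gen_inv, Hx.
Qed.

Lemma gen_in_image (S : H -> Prop) :
  (forall y, S y -> exists x, f x = y) -> forall y, gen S y -> exists x, f x = y.
Proof.
  intro HS. apply gen_least; auto.
  - exists gone. apply hom_one.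
  - intros y1 y2 [x1 <-] [x2 <-]. exists (gmul x1 x2). apply fM.
  - intros y [x <-]. exists (ginv x). apply hom_inv.
Qed.

Lemma gen_in_kernel (S : G -> Prop) :
  (forall x, S x -> f x = gone) -> forall x, gen S x -> f x = gone.
Proof.
  intro HS. apply gen_least; auto.
  - apply hom_one.
  - intros x y Hx Hy. rewrite fM, Hx, Hy. apply gmul1l.
  - intros x Hx. rewrite hom_inv, Hx. symmetry. apply ginv_unique, gmul1l.
Qed.

Lemma inverse_of_injective_hom (Im : H -> Prop)
  (finj : forall a b, f a = f b -> a = b) (hIm : forall y, Im y <-> exists x, f x = y) :
  exists g : H -> G,
    (forall y y', Im y -> Im y' -> g (gmul y y') = gmul (g y) (g y')) /\
    (forall y y', Im y -> Im y' -> g y = g y' -> y = y') /\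
    (forall x, exists y, Im y /\ g y = x).
Proof.
  set (g := fun y => epsilon (inhabits gone) (fun x => f x = y)).
  assert (fg : forall y, Im y -> f (g y) = y).
  { intros y Hy. apply hIm in Hy. exact (epsilon_spec _ (fun x => f x = y) Hy). }
  exists g. split; [|split].
  - intros y y' Hy Hy'. apply finj.
    rewrite fM, !fg; [reflexivity | assumption..|].
    apply hIm. apply hIm in Hy as [x <-]. apply hIm in Hy' as [x' <-].
    exists (gmul x x'). apply fM.
  - intros y y' Hy Hy' E. rewrite <- (fg y Hy), <- (fg y' Hy'), E. reflexivity.
  - intro x. exists (f x).
    assert (Hx : Im (f x)) by (apply hIm; exists x; reflexivity).
    split; [assumption | apply finj, fg, Hx].
Qed.
End Homomorphisms.

Lemma hom_agree_gen (G H : group) (f f' : G -> H)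
  (fM : forall a b, f (gmul a b) = gmul (f a) (f b))
  (f'M : forall a b, f' (gmul a b) = gmul (f' a) (f' b))
  (S : G -> Prop) : (forall x, S x -> f x = f' x) -> forall x, gen S x -> f x = f' x.
Proof.
  intro HS. apply gen_least; auto.
  - rewrite (hom_one _ _ f fM). symmetry. exact (hom_one _ _ f' f'M).
  - intros x y Hx Hy. rewrite fM, f'M, Hx, Hy. reflexivity.
  - intros x Hx. rewrite (hom_inv _ _ f fM), (hom_inv _ _ f' f'M), Hx. reflexivity.
Qed.

Lemma Tc_eq (z w : Tc) : tre z = tre w -> tim z = tim w -> z = w.
Proof.
  destruct z as [a b h], w as [c d h']; simpl; intros; subst.
  f_equal. apply proof_irrelevance.
Qed.

Lemma tinv_norm (z : Tc) : tre z * tre z + (- tim z) * (- tim z) = 1.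
Proof. pose proof (tnorm z). lra. Qed.

(* complex conjugation, the inverse on T *)
Definition tinv (z : Tc) : Tc := mkT (tre z) (- tim z) (tinv_norm z).

Lemma tmulA z w u : tmul z (tmul w u) = tmul (tmul z w) u.
Proof. apply Tc_eq; simpl; ring. Qed.
Lemma tmulC z w : tmul z w = tmul w z.
Proof. apply Tc_eq; simpl; ring. Qed.
Lemma tmul1l z : tmul t1 z = z.
Proof. apply Tc_eq; simpl; ring. Qed.
Lemma tmul1r z : tmul z t1 = z.
Proof. apply Tc_eq; simpl; ring. Qed.
Lemma tmulVl z : tmul (tinv z) z = t1.
Proof. pose proof (tnorm z). apply Tc_eq; simpl; lra. Qed.
Lemma tmulVr z : tmul z (tinv z) = t1.
Proof. rewrite tmulC. apply tmulVl. Qed.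

Definition TG : group := Group Tc tmul t1 tinv tmulA tmul1l tmul1r tmulVl tmulVr.

Lemma tpow_gpow z n : tpow z n = @gpow TG z n.
Proof. induction n as [|n IH]; simpl; [|rewrite IH]; reflexivity. Qed.

Lemma tpow_mul z n k : tpow z (n * k) = tpow (tpow z n) k.
Proof. rewrite !tpow_gpow. exact (gpow_mul TG z n k). Qed.

Lemma tpow_t1 n : tpow t1 n = t1.
Proof. rewrite tpow_gpow. exact (gpow_one TG n). Qed.

Lemma tpow_tmul z w n : tpow (tmul z w) n = tmul (tpow z n) (tpow w n).
Proof.
  induction n as [|n IH]; simpl; [rewrite tmul1l; reflexivity|].
  rewrite IH. apply Tc_eq; simpl; ring.
Qed.

Lemma tpow_tinv z n : tpow (tinv z) n = tinv (tpow z n).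
Proof.
  induction n as [|n IH]; simpl; [apply Tc_eq; simpl; ring|].
  rewrite IH. apply Tc_eq; simpl; ring.
Qed.

Lemma tinv_t1 : tinv t1 = t1.
Proof. apply Tc_eq; simpl; ring. Qed.

Lemma tinv_eq_t1 z : tinv z = t1 -> z = t1.
Proof.
  intro H. pose proof (f_equal tre H) as Hre. pose proof (f_equal tim H) as Him.
  simpl in Hre, Him. apply Tc_eq; simpl; lra.
Qed.

Lemma tcomm z w : tmul (tmul (tinv z) (tinv w)) (tmul z w) = t1.
Proof.
  transitivity (tmul (tmul (tinv z) z) (tmul (tinv w) w)); [apply Tc_eq; simpl; ring|].
  rewrite !tmulVl. apply tmul1l.
Qed.

Lemma expi_add a b : tmul (expi a) (expi b) = expi (a + b).
Proof. apply Tc_eq; simpl; rewrite ?cos_plus, ?sin_plus; ring. Qed.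

Lemma tpow_expi t n : tpow (expi t) n = expi (INR n * t).
Proof.
  induction n as [|n IH].
  - apply Tc_eq; simpl; rewrite Rmult_0_l, ?cos_0, ?sin_0; reflexivity.
  - simpl tpow. rewrite IH, expi_add, S_INR. f_equal. ring.
Qed.

Lemma expi_0 : expi 0 = t1.
Proof. apply Tc_eq; simpl; [apply cos_0 | apply sin_0]. Qed.

Lemma expi_PI2 : expi (PI / 2) = ti.
Proof. apply Tc_eq; simpl; [apply cos_PI2 | apply sin_PI2]. Qed.

Lemma expi_period x (l : Z) : expi (x + 2 * IZR l * PI) = expi x.
Proof.
  destruct (Z_le_gt_dec 0 l).
  - rewrite <- (Z2Nat.id l), <- INR_IZR_INZ by lia.
    apply Tc_eq; simpl; [apply cos_period | apply sin_period].
  - replace x with ((x + 2 * IZR l * PI) + 2 * INR (Z.to_nat (- l)) * PI) at 2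
      by (rewrite INR_IZR_INZ, Z2Nat.id, opp_IZR by lia; ring).
    apply Tc_eq; simpl; symmetry; [apply cos_period | apply sin_period].
Qed.

Lemma expi_surj (z : Tc) : exists t, z = expi t.
Proof.
  pose proof (tnorm z) as N.
  assert (B : -1 <= tre z <= 1) by nra.
  assert (S : sqrt (1 - (tre z)²) = Rabs (tim z)).
  { rewrite <- sqrt_Rsqr_abs. f_equal. unfold Rsqr. lra. }
  destruct (Rle_dec 0 (tim z)).
  - exists (acos (tre z)). apply Tc_eq; simpl; [rewrite cos_acos; auto|].
    rewrite sin_acos, S, Rabs_right; lra.
  - exists (- acos (tre z)). apply Tc_eq; simpl; [rewrite cos_neg, cos_acos; auto|].
    rewrite sin_neg, sin_acos, S, Rabs_left; lra.
Qed.

Lemma expi_eq_t1 t : expi t = t1 -> exists j : Z, t = 2 * IZR j * PI.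
Proof.
  intro H. apply (f_equal tre) in H. simpl in H.
  assert (Hs : sin (t / 2) = 0).
  { pose proof (cos_2a_sin (t / 2)) as C. replace (2 * (t / 2)) with t in C by field.
    assert (sin (t / 2) * sin (t / 2) = 0) as Z by lra.
    apply Rmult_integral in Z. tauto. }
  apply sin_eq_0_0 in Hs as [k Hk]. exists k. lra.
Qed.

Lemma INR_pow2 n : INR (2 ^ n) = 2 ^ n.
Proof. rewrite pow_INR. reflexivity. Qed.

Lemma pow2_pos (n : nat) : (0 < 2 ^ n)%nat.
Proof. pose proof (Nat.pow_nonzero 2 n). lia. Qed.

Lemma odd_coprime_pow2 q n : Nat.Odd q -> rel_prime (Z.of_nat q) (Z.of_nat (2 ^ n)).
Proof.
  intro Hq. induction n as [|n IH].
  - apply rel_prime_sym, rel_prime_1.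
  - rewrite Nat.pow_succ_r', Nat2Z.inj_mul. apply rel_prime_mult; [|exact IH].
    apply rel_prime_sym, prime_rel_prime; [exact prime_2|].
    intros [c Hc]. destruct Hq as [r Hr]. lia.
Qed.

Section RootsOfUnity.
Variables N q : nat.
Hypothesis N_pos : (0 < N)%nat.
Hypothesis q_coprime : rel_prime (Z.of_nat q) (Z.of_nat N).

Definition omega : Tc := expi (2 * PI * INR q / INR N).

Lemma INR_N_pos : 0 < INR N.
Proof. apply lt_0_INR, N_pos. Qed.

Lemma tpow_omega k : tpow omega k = expi (2 * PI * (INR q * INR k) / INR N).
Proof.
  pose proof INR_N_pos. unfold omega. rewrite tpow_expi. f_equal. field. lra.
Qed.

Lemma omega_pow_N : tpow omega N = t1.
Proof.
  pose proof INR_N_pos. rewrite tpow_omega, <- expi_0, <- (expi_period 0 (Z.of_nat q)).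
  f_equal. rewrite <- INR_IZR_INZ. field. lra.
Qed.

(* q is invertible modulo N, so every residue j is a multiple q k mod N. *)
Lemma solve_congruence (j : Z) :
  exists (k : nat) (l : Z), (Z.of_nat q * Z.of_nat k = j + Z.of_nat N * l)%Z.
Proof.
  destruct (rel_prime_bezout _ _ q_coprime) as [u v Huv].
  set (n := Z.of_nat N) in *.
  assert (Hn : (0 < n)%Z) by (unfold n; lia).
  exists (Z.to_nat ((u * j) mod n)), (- v * j - Z.of_nat q * ((u * j) / n))%Z.
  rewrite Z2Nat.id by (apply Z.mod_pos_bound; lia).
  rewrite Z.mod_eq by lia.
  transitivity (j * (u * Z.of_nat q + v * n) - v * j * n - Z.of_nat q * (n * (u * j / n)))%Z;
    [ring | rewrite Huv; ring].
Qed.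

Lemma coprime_cancel (k : nat) (j : Z) :
  (Z.of_nat q * Z.of_nat k = Z.of_nat N * j)%Z -> exists l, k = (l * N)%nat.
Proof.
  intro H.
  assert (Hd : (Z.of_nat N | Z.of_nat k)%Z).
  { apply Gauss with (Z.of_nat q); [exists j; lia | apply rel_prime_sym, q_coprime]. }
  destruct Hd as [c Hc].
  assert (0 <= c)%Z by nia.
  exists (Z.to_nat c). apply Nat2Z.inj. rewrite Nat2Z.inj_mul, Z2Nat.id; lia.
Qed.

Lemma omega_order k : tpow omega k = t1 -> exists l, k = (l * N)%nat.
Proof.
  pose proof INR_N_pos. pose proof PI_RGT_0.
  rewrite tpow_omega. intro Hk. apply expi_eq_t1 in Hk as [j Hj].
  apply (coprime_cancel k j), eq_IZR. rewrite !mult_IZR, <- !INR_IZR_INZ.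
  replace (INR q * INR k) with (2 * PI * (INR q * INR k) / INR N * INR N / (2 * PI))
    by (field; lra).
  rewrite Hj. field. lra.
Qed.

Lemma roots_of_unity_powers z : tpow z N = t1 -> exists k, z = tpow omega k.
Proof.
  pose proof INR_N_pos. pose proof PI_RGT_0.
  destruct (expi_surj z) as [t ->]. rewrite tpow_expi. intro Hz.
  apply expi_eq_t1 in Hz as [j Hj].
  destruct (solve_congruence j) as [k [l Hkl]].
  exists k. rewrite tpow_omega, <- (expi_period t l). f_equal.
  apply (f_equal IZR) in Hkl. rewrite mult_IZR, plus_IZR, mult_IZR, <- !INR_IZR_INZ in Hkl.
  rewrite Hkl.
  replace (IZR j) with (INR N * t / (2 * PI)) by (rewrite Hj; field; lra).
  field. lra.
Qed.
End RootsOfUnity.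

Section Product.
Variables P Q : group.

Definition pmul (a b : P * Q) : P * Q := (gmul (fst a) (fst b), gmul (snd a) (snd b)).
Definition pinv (a : P * Q) : P * Q := (ginv (fst a), ginv (snd a)).

Lemma pmulA x y z : pmul x (pmul y z) = pmul (pmul x y) z.
Proof. unfold pmul; simpl. rewrite !gmulA. reflexivity. Qed.
Lemma pmul1l x : pmul (gone, gone) x = x.
Proof. destruct x; unfold pmul; simpl. rewrite !gmul1l. reflexivity. Qed.
Lemma pmul1r x : pmul x (gone, gone) = x.
Proof. destruct x; unfold pmul; simpl. rewrite !gmul1r. reflexivity. Qed.
Lemma pmulVl x : pmul (pinv x) x = (gone, gone).
Proof. destruct x; unfold pmul; simpl. rewrite !gmulVl. reflexivity. Qed.
Lemma pmulVr x : pmul x (pinv x) = (gone, gone).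
Proof. destruct x; unfold pmul; simpl. rewrite !gmulVr. reflexivity. Qed.

Definition prod_group : group :=
  Group (P * Q) pmul (gone, gone) pinv pmulA pmul1l pmul1r pmulVl pmulVr.

Lemma prod_pow (x : P) (y : Q) n : @gpow prod_group (x, y) n = (gpow x n, gpow y n).
Proof. induction n as [|n IH]; simpl; [|rewrite IH]; reflexivity. Qed.
End Product.

(* Quotient of a group M by the cyclic subgroup generated by a central element u
   of finite order N; classes are represented by choice. *)
Section CentralQuotient.
Variable M : group.
Variable u : M.
Variable N : nat.
Hypothesis N_pos : (0 < N)%nat.
Hypothesis u_order : gpow u N = gone.
Hypothesis u_central : forall x, gmul u x = gmul x u.

Definition qrel (x y : M) : Prop := exists k, y = gmul x (gpow u k).

Lemma upow_inv k : ginv (gpow u k) = gpow u (k * (N - 1)).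
Proof.
  symmetry. apply ginv_unique. rewrite <- gpow_add.
  replace (k + k * (N - 1))%nat with (N * k)%nat by nia.
  apply gpow_multiple, u_order.
Qed.

Lemma qrel_refl x : qrel x x.
Proof. exists 0%nat. simpl. rewrite gmul1r. reflexivity. Qed.

Lemma qrel_sym x y : qrel x y -> qrel y x.
Proof.
  intros [k ->]. exists (k * (N - 1))%nat.
  rewrite <- upow_inv, <- gmulA, gmulVr, gmul1r. reflexivity.
Qed.

Lemma qrel_trans x y z : qrel x y -> qrel y z -> qrel x z.
Proof. intros [k ->] [l ->]. exists (k + l)%nat. rewrite gpow_add, gmulA. reflexivity. Qed.

Lemma qrel_mul x x' y y' : qrel x x' -> qrel y y' -> qrel (gmul x y) (gmul x' y').
Proof.
  intros [k ->] [l ->]. exists (k + l)%nat. rewrite gpow_add, <- !gmulA. f_equal.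
  rewrite !gmulA, (gpow_central M u u_central). reflexivity.
Qed.

Lemma qrel_inv x x' : qrel x x' -> qrel (ginv x) (ginv x').
Proof.
  intros [k ->]. exists (k * (N - 1))%nat.
  rewrite ginv_mul, upow_inv, (gpow_central M u u_central). reflexivity.
Qed.

Definition qrep (x : M) : M := epsilon (inhabits (gone : M)) (qrel x).

Lemma qrep_rel x : qrel x (qrep x).
Proof. unfold qrep. apply epsilon_spec. exists x. apply qrel_refl. Qed.

Lemma qrep_eq x y : qrel x y -> qrep x = qrep y.
Proof.
  intro H. unfold qrep. f_equal. apply functional_extensionality; intro z.
  apply propositional_extensionality; split; intro H'.
  - apply qrel_trans with x; [apply qrel_sym|]; assumption.
  - apply qrel_trans with y; assumption.
Qed.

Definition QT := {x : M | qrep x = x}.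

Lemma QT_eq (a b : QT) : proj1_sig a = proj1_sig b -> a = b.
Proof.
  destruct a as [a ha], b as [b hb]; simpl; intros; subst.
  f_equal. apply proof_irrelevance.
Qed.

Definition cls (x : M) : QT := exist _ (qrep x) (qrep_eq _ _ (qrel_sym _ _ (qrep_rel x))).

Lemma cls_eq x y : cls x = cls y <-> qrel x y.
Proof.
  split; intro H.
  - apply (f_equal (@proj1_sig _ _)) in H. simpl in H.
    apply qrel_trans with (qrep x); [apply qrep_rel|].
    rewrite H. apply qrel_sym, qrep_rel.
  - apply QT_eq. simpl. apply qrep_eq, H.
Qed.

Lemma cls_surj (c : QT) : cls (proj1_sig c) = c.
Proof. apply QT_eq. destruct c; simpl. assumption. Qed.

Lemma QT_ind (Pr : QT -> Prop) : (forall x, Pr (cls x)) -> forall c, Pr c.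
Proof. intros H c. rewrite <- cls_surj. apply H. Qed.

Definition qmul (a b : QT) : QT := cls (gmul (proj1_sig a) (proj1_sig b)).
Definition qinv (a : QT) : QT := cls (ginv (proj1_sig a)).

Lemma qmul_cls x y : qmul (cls x) (cls y) = cls (gmul x y).
Proof. apply cls_eq. apply qrel_mul; apply qrel_sym, qrep_rel. Qed.

Lemma qinv_cls x : qinv (cls x) = cls (ginv x).
Proof. apply cls_eq. apply qrel_inv, qrel_sym, qrep_rel. Qed.

Lemma qmulA x y z : qmul x (qmul y z) = qmul (qmul x y) z.
Proof.
  revert x y z. refine (QT_ind _ _); intro x. refine (QT_ind _ _); intro y.
  refine (QT_ind _ _); intro z. rewrite !qmul_cls, gmulA. reflexivity.
Qed.
Lemma qmul1l x : qmul (cls gone) x = x.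
Proof. revert x. refine (QT_ind _ _); intro x. rewrite qmul_cls, gmul1l. reflexivity. Qed.
Lemma qmul1r x : qmul x (cls gone) = x.
Proof. revert x. refine (QT_ind _ _); intro x. rewrite qmul_cls, gmul1r. reflexivity. Qed.
Lemma qmulVl x : qmul (qinv x) x = cls gone.
Proof. revert x. refine (QT_ind _ _); intro x. rewrite qinv_cls, qmul_cls, gmulVl. reflexivity. Qed.
Lemma qmulVr x : qmul x (qinv x) = cls gone.
Proof. revert x. refine (QT_ind _ _); intro x. rewrite qinv_cls, qmul_cls, gmulVr. reflexivity. Qed.

Definition quotient_group : group :=
  Group QT qmul (cls gone) qinv qmulA qmul1l qmul1r qmulVl qmulVr.

Lemma quotient_pow x n : @gpow quotient_group (cls x) n = cls (gpow x n).
Proof. induction n as [|n IH]; simpl; [|rewrite IH; apply qmul_cls]; reflexivity. Qed.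
End CentralQuotient.

Section Zeta.
Variables m q : nat.

Definition zeta : Tc := expi (PI * INR q / 2 ^ (m + 3)).

Lemma zeta4_omega : tpow zeta 4 = omega (2 ^ (m + 2)) q.
Proof.
  assert (H2m : 0 < 2 ^ m) by (apply pow_lt; lra).
  unfold zeta, omega. rewrite tpow_expi, INR_pow2, !pow_add.
  f_equal. simpl. field. lra.
Qed.

(* zeta^(4 2^m) = i^q, which cancels (-i)^q; this holds for every q. *)
Lemma zeta_cancels_mi : tmul (tpow (tpow zeta 4) (2 ^ m)) (tpow tmi q) = t1.
Proof.
  assert (Hi : tpow (tpow zeta 4) (2 ^ m) = tpow ti q).
  { assert (H2m : 0 < 2 ^ m) by (apply pow_lt; lra).
    unfold zeta. rewrite <- tpow_mul, <- expi_PI2, !tpow_expi, mult_INR, INR_pow2, pow_add.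
    f_equal. simpl. field. lra. }
  rewrite Hi, <- tpow_tmul.
  replace (tmul ti tmi) with t1 by (apply Tc_eq; simpl; ring).
  apply tpow_t1.
Qed.

(* For odd q, omega^(q 2^m) = exp(pi i q^2 / 2) = i since q^2 = 1 mod 4. *)
Lemma zeta4_pow_i : Nat.Odd q -> tpow (tpow zeta 4) (q * 2 ^ m) = ti.
Proof.
  intros [r Hr]. assert (H2m : 0 < 2 ^ m) by (apply pow_lt; lra).
  unfold zeta. rewrite <- tpow_mul, tpow_expi, <- expi_PI2,
    <- (expi_period (PI / 2) (Z.of_nat (r * r + r))).
  f_equal. rewrite <- INR_IZR_INZ, Hr, !mult_INR, !plus_INR, mult_INR, INR_pow2, pow_add.
  rewrite mult_INR. simpl. field. lra.
Qed.
End Zeta.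

Section InsideHtilde.
Variables (m q : nat) (q_odd : Nat.Odd q)
  (G : group) (X Y : G) (iota : Tc -> G) (hG : is_Htilde G X Y iota).

Lemma Htilde_generated :
  forall g : G, gen (fun h => h = X \/ h = Y \/ exists z, h = iota z) g.
Proof. apply hG. Qed.

Lemma iotaM z w : iota (tmul z w) = gmul (iota z) (iota w).
Proof. apply hG. Qed.

Lemma X_order : gpow X 4 = gone.
Proof. apply hG. Qed.

Lemma Y_order : gpow Y 8 = gone.
Proof. apply hG. Qed.

Lemma iota_central z g : gmul (iota z) g = gmul g (iota z).
Proof. apply hG, Htilde_generated. Qed.

Lemma X_centralizes_derived g :
  derived (gen (fun h => h = X \/ h = Y \/ exists z, h = iota z)) g -> gmul X g = gmul g X.
Proof. apply hG. Qed.

Lemma YYX : comm Y (comm Y X) = iota ti.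
Proof. apply hG. Qed.

Lemma iota_one : iota t1 = gone.
Proof. exact (hom_one TG G iota iotaM). Qed.

Lemma iota_inv z : ginv (iota z) = iota (tinv z).
Proof. symmetry. exact (hom_inv TG G iota iotaM z). Qed.

Lemma iota_pow z n : iota (tpow z n) = gpow (iota z) n.
Proof. rewrite tpow_gpow. exact (hom_pow TG G iota iotaM z n). Qed.

Definition X' : G := gmul (iota (zeta m q)) X.
Definition W : G -> Prop := gen (fun g => g = X' \/ g = Y).

(* As X^4 = 1, the powers X'^(4k) lie in the central subgroup iota(T). *)
Lemma X'_pow4 k : gpow X' (4 * k) = iota (tpow (tpow (zeta m q) 4) k).
Proof.
  unfold X'. rewrite (gpow_mul_central G _ (iota_central (zeta m q))),
    (gpow_multiple G X 4 k X_order), gmul1r, gpow_mul, !iota_pow.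
  reflexivity.
Qed.

Lemma W_Hmq_rels : Hmq_rels m q G X' Y.
Proof.
  split; [|split; [|split; [|split]]].
  - replace (2 ^ (m + 4))%nat with (4 * 2 ^ (m + 2))%nat by (rewrite !Nat.pow_add_r; simpl; lia).
    rewrite X'_pow4, zeta4_omega, omega_pow_N by apply pow2_pos. apply iota_one.
  - apply Y_order.
  - intros g _. replace 4%nat with (4 * 1)%nat by reflexivity.
    rewrite X'_pow4. apply iota_central.
  - intros g Hg. unfold X'.
    rewrite <- gmulA, X_centralizes_derived, gmulA, (iota_central _ g), gmulA; [reflexivity|].
    revert g Hg. apply gen_mono. intros c [a [b [_ [_ ->]]]].
    exists a, b. repeat split; apply Htilde_generated.
  - unfold X'. rewrite comm_central by apply iota_central.
    replace (q * 2 ^ (m + 2))%nat with (4 * (q * 2 ^ m))%nat by (rewrite Nat.pow_add_r; simpl; lia).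
    rewrite YYX, X'_pow4, zeta4_pow_i by exact q_odd. reflexivity.
Qed.

(* H~ = iota(T) W, since X = iota(zeta)^-1 X'. *)
Lemma central_decomposition g : exists z w, W w /\ g = gmul (iota z) w.
Proof.
  apply (gen_least G (fun h => h = X \/ h = Y \/ exists z, h = iota z)
           (fun g => exists z w, W w /\ g = gmul (iota z) w));
    [| | | |apply Htilde_generated].
  - exists t1, gone. split; [apply gen_one | rewrite iota_one, gmul1l; reflexivity].
  - intros x1 x2 [z1 [w1 [Hw1 ->]]] [z2 [w2 [Hw2 ->]]].
    exists (tmul z1 z2), (gmul w1 w2). split; [apply gen_mul; assumption|].
    rewrite iotaM, <- !gmulA. f_equal. rewrite !gmulA. f_equal. symmetry. apply iota_central.
  - intros x [z [w [Hw ->]]]. exists (tinv z), (ginv w). split; [apply gen_inv, Hw|].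
    rewrite ginv_mul, iota_inv. symmetry. apply iota_central.
  - intros x [->|[->|[z ->]]].
    + exists (tinv (zeta m q)), X'. split; [apply gen_in; left; reflexivity|].
      unfold X'. rewrite gmulA, <- iotaM, tmulVl, iota_one, gmul1l. reflexivity.
    + exists t1, Y. split; [apply gen_in; right; reflexivity|].
      rewrite iota_one, gmul1l. reflexivity.
    + exists z, gone. split; [apply gen_one | rewrite gmul1r; reflexivity].
Qed.

(* An element iota(z) with z^(2^(m+2)) = 1 lies in W: z = omega^k, so iota(z) = X'^(4k). *)
Lemma iota_root_in_W z : tpow z (2 ^ (m + 2)) = t1 -> W (iota z).
Proof.
  intro Hz.
  destruct (roots_of_unity_powers _ q (pow2_pos _) (odd_coprime_pow2 q _ q_odd) z Hz)
    as [k ->].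
  rewrite <- zeta4_omega, <- X'_pow4. apply gen_pow, gen_in. left. reflexivity.
Qed.

Variables (theta psi : G -> Tc)
  (htheta : hom_to_T theta) (hthX : theta X = t1) (hthY : theta Y = t1)
  (hthT : forall z, theta (iota z) = tpow z 4)
  (hpsi : hom_to_T psi) (hpsX : psi X = tmi) (hpsY : psi Y = t1)
  (hpsT : forall z, psi (iota z) = t1).

(* the character chi = 2^m theta + q psi *)
Definition chi (g : G) : Tc := tmul (tpow (theta g) (2 ^ m)) (tpow (psi g) q).

Lemma chiM g h : chi (gmul g h) = tmul (chi g) (chi h).
Proof.
  unfold chi. rewrite htheta, hpsi, !tpow_tmul. apply Tc_eq; simpl; ring.
Qed.

Lemma chi_iota z : chi (iota z) = tpow z (2 ^ (m + 2)).
Proof.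
  unfold chi. rewrite hthT, hpsT, tpow_t1, tmul1r, <- tpow_mul.
  f_equal. rewrite Nat.pow_add_r. simpl. lia.
Qed.

Lemma W_in_kernel g : W g -> chi g = t1.
Proof.
  apply (gen_in_kernel G TG chi chiM). intros x [->| ->].
  - unfold chi, X'. rewrite htheta, hpsi, hthT, hpsT, hthX, hpsX, tmul1r, tmul1l.
    apply zeta_cancels_mi.
  - unfold chi. rewrite hthY, hpsY, !tpow_t1. apply tmul1l.
Qed.

Lemma kernel_eq_W g : chi g = t1 <-> W g.
Proof.
  split; [|apply W_in_kernel].
  intro Hg. destruct (central_decomposition g) as [z [w [Hw ->]]].
  rewrite chiM, (W_in_kernel w Hw), tmul1r, chi_iota in Hg.
  apply gen_mul; [apply iota_root_in_W, Hg | exact Hw].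
Qed.
End InsideHtilde.

(* A model of H~ built from H(m,q): the quotient of H(m,q) x T by the central
   element u = (A^4, omega^-1), of order 2^(m+2). *)
Section Model.
Variables (m q : nat) (q_odd : Nat.Odd q) (P : group) (A B : P) (hP : is_Hmq m q P A B).

Lemma Hmq_generated : forall p : P, gen (fun h => h = A \/ h = B) p.
Proof. apply hP. Qed.

Lemma A_order : gpow A (2 ^ (m + 4)) = gone.
Proof. apply hP. Qed.

Lemma B_order : gpow B 8 = gone.
Proof. apply hP. Qed.

Lemma A4_central p : gmul (gpow A 4) p = gmul p (gpow A 4).
Proof. apply hP, Hmq_generated. Qed.

Lemma A_centralizes_derived p :
  derived (gen (fun h => h = A \/ h = B)) p -> gmul A p = gmul p A.
Proof. apply hP. Qed.

Lemma BBA : comm B (comm B A) = gpow A (q * 2 ^ (m + 2)).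
Proof. apply hP. Qed.

Definition MT : group := prod_group P TG.

Lemma MT_mul (a b : P) (z w : Tc) : @gmul MT (a, z) (b, w) = (gmul a b, tmul z w).
Proof. reflexivity. Qed.

Lemma MT_pow (a : P) (z : Tc) n : @gpow MT (a, z) n = (gpow a n, tpow z n).
Proof. unfold MT. rewrite prod_pow, tpow_gpow. reflexivity. Qed.

Lemma MT_comm (a b : P) (z w : Tc) : @comm MT (a, z) (b, w) = (comm a b, t1).
Proof. unfold comm. simpl. unfold pmul. simpl. rewrite tcomm. reflexivity. Qed.

Definition u : MT := (gpow A 4, tinv (tpow (zeta m q) 4)).

Lemma u_order : gpow u (2 ^ (m + 2)) = gone.
Proof.
  unfold u. rewrite MT_pow, tpow_tinv, zeta4_omega, omega_pow_N, <- gpow_mul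
    by apply pow2_pos.
  replace (4 * 2 ^ (m + 2))%nat with (2 ^ (m + 4))%nat by (rewrite !Nat.pow_add_r; simpl; lia).
  rewrite A_order, tinv_t1. reflexivity.
Qed.

Lemma u_central x : gmul u x = gmul x u.
Proof. destruct x as [p z]. unfold u. rewrite !MT_mul, A4_central, tmulC. reflexivity. Qed.

Definition Qm : group := quotient_group MT u (2 ^ (m + 2)) (pow2_pos _) u_order u_central.
Definition cl (x : MT) : Qm := cls MT u (2 ^ (m + 2)) (pow2_pos _) u_order x.

Lemma cl_mul x y : gmul (cl x) (cl y) = cl (gmul x y).
Proof. exact (qmul_cls MT u _ _ u_order u_central x y). Qed.

Lemma cl_inv x : ginv (cl x) = cl (ginv x).
Proof. exact (qinv_cls MT u _ _ u_order u_central x). Qed.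

Lemma cl_pow x n : gpow (cl x) n = cl (gpow x n).
Proof. exact (quotient_pow MT u _ _ u_order u_central x n). Qed.

Lemma cl_comm x y : comm (cl x) (cl y) = cl (comm x y).
Proof. unfold comm. rewrite !cl_inv, !cl_mul. reflexivity. Qed.

Lemma cl_eq x y : cl x = cl y <-> qrel MT u x y.
Proof. exact (cls_eq MT u _ _ u_order x y). Qed.

Lemma cl_surj (c : Qm) : exists x, c = cl x.
Proof. exists (proj1_sig c). symmetry. exact (cls_surj MT u _ _ u_order c). Qed.

Definition embed (p : P) : Qm := cl (p, t1).

Lemma embed_mul p p' : embed (gmul p p') = gmul (embed p) (embed p').
Proof. unfold embed. rewrite cl_mul, MT_mul, tmul1l. reflexivity. Qed.

Lemma embed_inv p : embed (ginv p) = ginv (embed p).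
Proof.
  unfold embed. rewrite cl_inv. simpl. unfold pinv. simpl. rewrite tinv_t1. reflexivity.
Qed.

(* Injectivity: (p, 1) u^k = (p', 1) forces 2^(m+2) | k, as omega has exact
   order 2^(m+2); then A^(4k) = 1. *)
Lemma embed_injective p p' : embed p = embed p' -> p = p'.
Proof.
  intro H. apply cl_eq in H as [k Hk].
  unfold u in Hk. rewrite MT_pow, MT_mul, tmul1l, tpow_tinv, zeta4_omega in Hk.
  pose proof (f_equal fst Hk) as Hp. pose proof (f_equal snd Hk) as Hz.
  cbn [fst snd] in Hp, Hz. symmetry in Hz. apply tinv_eq_t1 in Hz.
  destruct (omega_order _ q (pow2_pos _) (odd_coprime_pow2 q _ q_odd) k Hz) as [l ->].
  rewrite Hp, <- gpow_mul.
  replace (4 * (l * 2 ^ (m + 2)))%nat with (2 ^ (m + 4) * l)%nat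
    by (rewrite !Nat.pow_add_r; simpl; lia).
  rewrite (gpow_multiple P A _ l A_order), gmul1r. reflexivity.
Qed.

Definition x_model : Qm := cl (A, tinv (zeta m q)).
Definition y_model : Qm := embed B.
Definition iota_model (z : Tc) : Qm := cl (gone, z).

(* Elements of the derived subgroup of the model come from the derived subgroup
   of H(m,q), because T is abelian. *)
Lemma model_derived g :
  derived (gen (fun h => h = x_model \/ h = y_model \/ exists z, h = iota_model z)) g ->
  exists p, derived (gen (fun h => h = A \/ h = B)) p /\ g = embed p.
Proof.
  revert g. apply gen_least.
  - exists gone. split; [apply gen_one | reflexivity].
  - intros g1 g2 [p1 [H1 ->]] [p2 [H2 ->]].
    exists (gmul p1 p2). split; [apply gen_mul; assumption | symmetry; apply embed_mul].
  - intros g1 [p1 [H1 ->]]. exists (ginv p1).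
    split; [apply gen_inv, H1 | symmetry; apply embed_inv].
  - intros c [a [b [_ [_ ->]]]].
    destruct (cl_surj a) as [[pa za] ->]. destruct (cl_surj b) as [[pb zb] ->].
    exists (comm pa pb). split.
    + apply gen_in. exists pa, pb. repeat split; apply Hmq_generated.
    + rewrite cl_comm, MT_comm. reflexivity.
Qed.

Lemma model_rels : Htilde_rels Qm x_model y_model iota_model.
Proof.
  split; [|split; [|split; [|split; [|split]]]].
  - intros z w. unfold iota_model. rewrite cl_mul, MT_mul, gmul1l. reflexivity.
  - unfold x_model. rewrite cl_pow, MT_pow. symmetry. apply cl_eq. exists 1%nat.
    change (gpow u 1) with (gmul u gone). rewrite gmul1l, gmul1r.
    unfold u. rewrite tpow_tinv. reflexivity.
  - unfold y_model, embed. rewrite cl_pow, MT_pow, B_order, tpow_t1. reflexivity.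
  - intros z g _. destruct (cl_surj g) as [[p w] ->]. unfold iota_model.
    rewrite !cl_mul, !MT_mul, gmul1l, gmul1r, tmulC. reflexivity.
  - intros g Hg. destruct (model_derived g Hg) as [p [Hp ->]].
    unfold x_model, embed. rewrite !cl_mul, !MT_mul, A_centralizes_derived, tmul1l, tmul1r
      by exact Hp.
    reflexivity.
  - unfold y_model, x_model, embed, iota_model.
    rewrite !cl_comm, !MT_comm, BBA. symmetry. apply cl_eq. exists (q * 2 ^ m)%nat.
    unfold u. rewrite MT_pow, MT_mul, gmul1l, tpow_tinv, zeta4_pow_i, tmulVr, <- gpow_mul
      by exact q_odd.
    f_equal. f_equal. rewrite Nat.pow_add_r. simpl. lia.
Qed.
End Model.

(* The homomorphism h : H(m,q) -> H~ given by A |-> X', B |-> Y is injective with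
   image W: composing with the map H~ -> model gives the embedding p |-> (p, 1). *)
Lemma Hmq_embeds_onto_W (m q : nat) (q_odd : Nat.Odd q)
  (G : group) (X Y : G) (iota : Tc -> G) (hG : is_Htilde G X Y iota)
  (P : group) (A B : P) (hP : is_Hmq m q P A B) :
  exists h : P -> G,
    (forall p p', h (gmul p p') = gmul (h p) (h p')) /\
    (forall p p', h p = h p' -> p = p') /\
    (forall g, W m q G X Y iota g <-> exists p, h p = g).
Proof.
  destruct (proj2 (proj2 hP) G _ Y (W_Hmq_rels m q q_odd G X Y iota hG))
    as [h [hM [hA hB]]].
  destruct (proj2 (proj2 hG) _ _ _ _ (model_rels m q q_odd P A B hP))
    as [Phi [PhiM [PhiX [PhiY PhiT]]]].
  assert (PhihM : forall p p', Phi (h (gmul p p')) = gmul (Phi (h p)) (Phi (h p')))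
    by (intros p p'; rewrite hM; apply PhiM).
  assert (Hcomp : forall p, Phi (h p) = embed m q P A B hP p).
  { intro p. apply (hom_agree_gen P _ (fun p => Phi (h p)) (embed m q P A B hP)
             PhihM (embed_mul m q P A B hP)
             (fun h => h = A \/ h = B)); [|apply (Hmq_generated m q P A B hP)].
    intros x [-> | ->].
    - rewrite hA. unfold X'. rewrite PhiM, PhiT, PhiX.
      unfold iota_model, x_model, embed. rewrite cl_mul, MT_mul, gmul1l, tmulVr.
      reflexivity.
    - rewrite hB, PhiY. reflexivity. }
  exists h. split; [exact hM | split].
  - intros p p' E. apply (embed_injective m q q_odd P A B hP). rewrite <- !Hcomp, E.
    reflexivity.
  - intro g. split.
    + apply (gen_in_image P G h hM). intros y [-> | ->]; [exists A | exists B]; assumption.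
    + intros [p <-]. apply (hom_gen P G h hM (fun h => h = A \/ h = B));
        [|apply (Hmq_generated m q P A B hP)].
      intros x [-> | ->]; apply gen_in; [left; exact hA | right; exact hB].
Qed.

Theorem mainTheorem9 (m q : nat) (hq : q = 1%nat \/ q = 3%nat)
  (G : group) (X Y : G) (iota : Tc -> G) (hG : is_Htilde G X Y iota)
  (theta psi : G -> Tc)
  (htheta : hom_to_T theta) (hthX : theta X = t1) (hthY : theta Y = t1)
  (hthT : forall z, theta (iota z) = tpow z 4)
  (hpsi : hom_to_T psi) (hpsX : psi X = tmi) (hpsY : psi Y = t1)
  (hpsT : forall z, psi (iota z) = t1) :
  let chi := fun g => tmul (tpow (theta g) (2 ^ m)) (tpow (psi g) q) in
  let K := fun g => chi g = t1 in
  (forall g, K g <->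
     gen (fun h => h = gmul (iota (expi (PI * INR q / 2 ^ (m + 3)))) X \/ h = Y) g) /\
  (forall (P : group) (A B : P), is_Hmq m q P A B ->
     exists phi : G -> P,
       (forall g h, K g -> K h -> phi (gmul g h) = gmul (phi g) (phi h)) /\
       (forall g h, K g -> K h -> phi g = phi h -> g = h) /\
       (forall p, exists g, K g /\ phi g = p)).
Proof.
  intros chi0 K.
  assert (q_odd : Nat.Odd q)
    by (destruct hq as [-> | ->]; [exists 0%nat | exists 1%nat]; reflexivity).
  assert (HK : forall g, K g <-> W m q G X Y iota g)
    by exact (kernel_eq_W m q q_odd G X Y iota hG theta psi
                htheta hthX hthY hthT hpsi hpsX hpsY hpsT).
  split; [exact HK|].
  intros P A B hP.
  destruct (Hmq_embeds_onto_W m q q_odd G X Y iota hG P A B hP) as [h [hM [hinj hIm]]].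
  apply (inverse_of_injective_hom P G h hM K hinj).
  intro g. rewrite HK. apply hIm.
Qed.
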